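(* Assume the general single-user setting below, with $T=\tau_n+D_n$. Define $V^l(0)=0$, $$V^l(\tau)=\max_{e\in\mathcal E,\,e>0}\frac{1-[1-\zeta(i^{\min},e)]^{\tau}}{\zeta(i^{\min},e)}\big[-\lambda e+\zeta(i^{\min},e)\beta\big],\quad \tau\ge1,$$ and $V^u(0)=0$, $$V^u(\tau)=\sum_{z=1}^{\tau}\max_{e\in\mathcal E}\Big\{-\lambda e+\zeta(i^{\max},e)\big(\beta-\max\{0,V^l(z-1)\}\big)\Big\},\quad\tau\ge1.$$ Then for every state $i$ and every $1\le\tau\le T$, $$\max\{0,V^l(\tau)\}\le V(0,\tau,i)\le\min\{\beta,V^u(\tau)\}.$$
   Context: General single-user setting (perfect prediction): fix $\beta\ge0$, $\lambda\ge0$ and integers $\tau_n\ge1$, $D_n\ge0$. The channel is a finite-state Markov chain on $\{1,\dots,K\}$ with transition matrix $(P^{i,j})$. $\mathcal E\subset[0,\infty)$ is a finite set of resource levels containing $0$ and at least one positive element. For each state $i$, $\zeta(i,\cdot):\mathcal E\to[0,1]$ with $\zeta(i,0)=0$, $\zeta(i,e)>0$ for $e>0$, and $\zeta(i,\cdot)$ strictly increasing (restriction of a concave strictly increasing function). The states are totally ordered by $\zeta$: for every $i,j$, either $\zeta(i,e)\ge\zeta(j,e)$ for all $e\in\mathcal E$ or $\zeta(i,e)\le\zeta(j,e)$ for all $e\in\mathcal E$; $i^{\max}$ is a state with $\zeta(i^{\max},e)\ge\zeta(i,e)$ for all $i,e$, and $i^{\min}$ a state with $\zeta(i^{\min},e)\le\zeta(i,e)$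 for all $i,e$. The value function is $V(0,0,i)=0$ and, for $1\le\tau\le\tau_n+D_n$, $V(0,\tau,i)=\max_{e\in\mathcal E}\{-\lambda e+\zeta(i,e)\beta+(1-\zeta(i,e))\sum_jP^{i,j}V(0,\tau-1,j)\}$. *)

From Stdlib Require Import Reals List.
Import ListNotations.
Open Scope R_scope.

(* Maximum of f over a list; the value on the empty list (0) is irrelevant
   since it is only applied to lists shown non-empty by hypothesis. *)
Definition lmax (f : R -> R) (l : list R) : R :=
  match l with
  | [] => 0
  | x :: xs => fold_right (fun e acc => Rmax (f e) acc) (f x) xs
  end.

Definition rsum (K : nat) (f : nat -> R) : R :=
  fold_right Rplus 0 (map f (seq 0 K)).

Definition pos_part (E : list R) : list R :=
  filter (fun e => if Rlt_dec 0 e then true else false) E.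

(* Value function V(0,tau,i); states are 0..K-1. *)
Fixpoint Vval (K : nat) (P : nat -> nat -> R) (E : list R)
    (zeta : nat -> R -> R) (beta lambda : R) (tau : nat) (i : nat) : R :=
  match tau with
  | O => 0
  | S t => lmax (fun e => - lambda * e + zeta i e * beta
                   + (1 - zeta i e) *
                     rsum K (fun j => P i j * Vval K P E zeta beta lambda t j)) E
  end.

Definition Vl (E : list R) (zeta : nat -> R -> R) (imin : nat)
    (beta lambda : R) (tau : nat) : R :=
  match tau with
  | O => 0
  | S _ => lmax (fun e => (1 - (1 - zeta imin e) ^ tau) / zeta imin e
                         * (- lambda * e + zeta imin e * beta)) (pos_part E)
  end.

Definition Vu (E : list R) (zeta : nat -> R -> R) (imin imax : nat)
    (beta lambda : R) (tau : nat) : R :=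
  fold_right Rplus 0
    (map (fun z => lmax (fun e => - lambda * e + zeta imax e *
                          (beta - Rmax 0 (Vl E zeta imin beta lambda (z - 1)))) E)
         (seq 1 tau)).

Definition concave_nonneg (g : R -> R) : Prop :=
  forall x y t, 0 <= x -> 0 <= y -> 0 <= t <= 1 ->
    t * g x + (1 - t) * g y <= g (t * x + (1 - t) * y).

Definition strict_incr_nonneg (g : R -> R) : Prop :=
  forall x y, 0 <= x -> x < y -> g x < g y.

(** The policy that spends one fixed positive level [e] in every slot is
    worst when the channel always sits in [i^min]; its value then obeys
    [W(t+1) = c + (1 - z) W(t)] with [z = zeta(i^min, e)], whose solution is the
    geometric sum in [V^l].  Since [V] maximises over policies, [V >= W] for
    every such [e], hence [V >= V^l]; [V >= 0] comes from [e = 0].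
    Conversely [V <= beta] since the reward is only collected once, and one
    step of the recursion gains at most
    [-lambda e + zeta(i^max, e) (beta - V(t))], in which [V(t)] may be replaced
    by its lower bound [max 0 V^l(t)]; summing these gains gives [V^u]. *)
From Stdlib Require Import Reals List Lra Lia Psatz.
Import ListNotations.
Open Scope R_scope.

Lemma fold_Rmax_ge (f : R -> R) (a : R) (xs : list R) :
  a <= fold_right (fun e acc => Rmax (f e) acc) a xs /\
  (forall y, In y xs -> f y <= fold_right (fun e acc => Rmax (f e) acc) a xs).
Proof.
  induction xs as [|x xs [Ha Hxs]]; simpl; [split; [lra | tauto]|].
  split.
  - eapply Rle_trans; [exact Ha | apply Rmax_r].
  - intros y [<- | Hy]; [apply Rmax_l|].
    eapply Rle_trans; [apply Hxs, Hy | apply Rmax_r].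
Qed.

Lemma fold_Rmax_le (f : R -> R) (a b : R) (xs : list R) :
  a <= b -> (forall y, In y xs -> f y <= b) ->
  fold_right (fun e acc => Rmax (f e) acc) a xs <= b.
Proof.
  induction xs as [|x xs IH]; simpl; intros Ha Hb; [exact Ha|].
  apply Rmax_lub; auto.
Qed.

Lemma fold_Rmax_attained (f : R -> R) (a : R) (xs : list R) :
  fold_right (fun e acc => Rmax (f e) acc) a xs = a \/
  exists y, In y xs /\ fold_right (fun e acc => Rmax (f e) acc) a xs = f y.
Proof.
  induction xs as [|x xs IH]; simpl; [now left|].
  set (acc := fold_right _ a xs) in *.
  destruct (Rle_dec (f x) acc) as [Hle | Hgt].
  - rewrite Rmax_right by exact Hle.
    destruct IH as [H | [y [Hy H]]]; [now left | right; exists y; auto].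
  - rewrite Rmax_left by lra; right; exists x; auto.
Qed.

Lemma lmax_ge (f : R -> R) (l : list R) (x : R) : In x l -> f x <= lmax f l.
Proof.
  destruct l as [|y ys]; simpl; [tauto|].
  destruct (fold_Rmax_ge f (f y) ys) as [Hy Hys].
  intros [<- | Hx]; auto.
Qed.

Lemma lmax_le (f : R -> R) (l : list R) (b : R) :
  l <> [] -> (forall x, In x l -> f x <= b) -> lmax f l <= b.
Proof.
  destruct l as [|y ys]; simpl; intros Hl Hb; [tauto|].
  apply fold_Rmax_le; auto.
Qed.

Lemma lmax_attained (f : R -> R) (l : list R) :
  l <> [] -> exists x, In x l /\ lmax f l = f x.
Proof.
  destruct l as [|y ys]; simpl; intros Hl; [tauto|].
  destruct (fold_Rmax_attained f (f y) ys) as [H | [z [Hz H]]];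
    [exists y | exists z]; auto.
Qed.

Lemma fold_Rplus_init (a : R) (l : list R) :
  fold_right Rplus a l = fold_right Rplus 0 l + a.
Proof. induction l as [|x l IH]; simpl; [|rewrite IH]; lra. Qed.

Lemma rsum_S (K : nat) (f : nat -> R) : rsum (S K) f = rsum K f + f K.
Proof.
  unfold rsum; rewrite seq_S, map_app, fold_right_app; simpl.
  rewrite fold_Rplus_init; lra.
Qed.

Lemma rsum_le (K : nat) (f g : nat -> R) :
  (forall j, (j < K)%nat -> f j <= g j) -> rsum K f <= rsum K g.
Proof.
  induction K as [|K IH]; intros Hfg; [unfold rsum; simpl; lra|].
  rewrite !rsum_S.
  apply Rplus_le_compat; [apply IH; intros j Hj|]; apply Hfg; lia.
Qed.

Lemma rsum_mulr (K : nat) (f : nat -> R) (c : R) :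
  rsum K (fun j => f j * c) = rsum K f * c.
Proof.
  induction K as [|K IH]; [unfold rsum; simpl; lra|].
  rewrite !rsum_S, IH; lra.
Qed.

Lemma rsum_convex_bounds (K : nat) (w v : nat -> R) (lo hi : R) :
  (forall j, (j < K)%nat -> 0 <= w j) -> rsum K w = 1 ->
  (forall j, (j < K)%nat -> lo <= v j <= hi) ->
  lo <= rsum K (fun j => w j * v j) <= hi.
Proof.
  intros Hw Hw1 Hv.
  assert (Hconst : forall c, c = rsum K (fun j => w j * c))
    by (intro c; rewrite rsum_mulr, Hw1; lra).
  split; [rewrite (Hconst lo) | rewrite (Hconst hi)]; apply rsum_le;
    intros j Hj; specialize (Hw j Hj); specialize (Hv j Hj); nra.
Qed.

Lemma pow_unit_interval (q : R) (t : nat) : 0 <= q <= 1 -> 0 <= q ^ t <= 1.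
Proof. intros Hq; induction t; simpl; nra. Qed.

Definition geometric_value (z c : R) (t : nat) : R := (1 - (1 - z) ^ t) / z * c.

Lemma geometric_value_O (z c : R) : z <> 0 -> geometric_value z c 0 = 0.
Proof. intros Hz; unfold geometric_value; simpl; field; exact Hz. Qed.

Lemma geometric_value_S (z c : R) (t : nat) : z <> 0 ->
  geometric_value z c (S t) = c + (1 - z) * geometric_value z c t.
Proof. intros Hz; unfold geometric_value; simpl; field; exact Hz. Qed.

(* The value equals [(1 - (1 - z)^t) (b - a / z)]. *)
Lemma geometric_value_le (z a b : R) (t : nat) :
  0 < z <= 1 -> 0 <= a -> 0 <= b -> geometric_value z (- a + z * b) t <= b.
Proof.
  intros Hz Ha Hb.
  assert (Hq := pow_unit_interval (1 - z) t ltac:(lra)).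
  assert (Haz : 0 <= a / z) by (apply Rle_mult_inv_pos; lra).
  unfold geometric_value.
  replace ((1 - (1 - z) ^ t) / z * (- a + z * b))
    with ((1 - (1 - z) ^ t) * (b - a / z)) by (field; lra).
  nra.
Qed.

Section ValueBounds.

Variables (K : nat) (P : nat -> nat -> R) (E : list R) (zeta : nat -> R -> R)
  (beta lambda : R) (imax imin : nat).

Hypothesis Hbeta : 0 <= beta.
Hypothesis Hlambda : 0 <= lambda.
Hypothesis HPnn : forall i j, (i < K)%nat -> (j < K)%nat -> 0 <= P i j.
Hypothesis HPsum : forall i, (i < K)%nat -> rsum K (fun j => P i j) = 1.
Hypothesis HEnn : forall e, In e E -> 0 <= e.
Hypothesis HE0 : In 0 E.
Hypothesis HEpos : exists e, In e E /\ 0 < e.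
Hypothesis Hz01 : forall i e, (i < K)%nat -> In e E -> 0 <= zeta i e <= 1.
Hypothesis Hz0 : forall i, (i < K)%nat -> zeta i 0 = 0.
Hypothesis Hzpos : forall i e, (i < K)%nat -> In e E -> 0 < e -> 0 < zeta i e.
Hypothesis Himax_ge : forall i e, (i < K)%nat -> In e E -> zeta i e <= zeta imax e.
Hypothesis Himin : (imin < K)%nat.
Hypothesis Himin_le : forall i e, (i < K)%nat -> In e E -> zeta imin e <= zeta i e.

Let V := Vval K P E zeta beta lambda.
Let Vlow := Vl E zeta imin beta lambda.
Let Vup := Vu E zeta imin imax beta lambda.

Lemma E_neq_nil : E <> [].
Proof. intros HE; rewrite HE in HE0; destruct HE0. Qed.

Lemma Vval_S (t i : nat) :
  V (S t) i = lmax (fun e => - lambda * e + zeta i e * beta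
                 + (1 - zeta i e) * rsum K (fun j => P i j * V t j)) E.
Proof. reflexivity. Qed.

Lemma expected_Vval_bounds (i t : nat) (lo hi : R) : (i < K)%nat ->
  (forall j, (j < K)%nat -> lo <= V t j <= hi) ->
  lo <= rsum K (fun j => P i j * V t j) <= hi.
Proof.
  intros Hi; apply rsum_convex_bounds; [intros j Hj; apply HPnn | apply HPsum]; auto.
Qed.

Lemma Vval_range (t i : nat) : (i < K)%nat -> 0 <= V t i <= beta.
Proof.
  revert i; induction t as [|t IH]; intros i Hi; [unfold V; simpl; lra|].
  assert (HA := expected_Vval_bounds i t 0 beta Hi IH).
  rewrite Vval_S; split.
  - eapply Rle_trans; [|apply (lmax_ge _ _ 0 HE0)]; cbv beta.
    rewrite (Hz0 i Hi); lra.
  - apply lmax_le; [exact E_neq_nil|]; intros e He.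
    specialize (Hz01 i e Hi He); specialize (HEnn e He); nra.
Qed.

Lemma geometric_value_le_Vval (e : R) (t i : nat) : In e E -> 0 < e -> (i < K)%nat ->
  geometric_value (zeta imin e) (- lambda * e + zeta imin e * beta) t <= V t i.
Proof.
  intros He He0; set (z := zeta imin e); set (c := - lambda * e + z * beta).
  assert (Hz : 0 < z <= 1)
    by (split; [apply Hzpos | apply Hz01]; auto).
  revert i; induction t as [|t IH]; intros i Hi.
  - rewrite geometric_value_O by lra; apply Vval_range, Hi.
  - assert (HWb : geometric_value z c t <= beta).
    { unfold c; replace (- lambda * e) with (- (lambda * e)) by ring.
      apply geometric_value_le; [lra | apply Rmult_le_pos; auto | exact Hbeta]. }
    assert (HA := expected_Vval_bounds i t (geometric_value z c t) beta Hi
                    (fun j Hj => conj (IH j Hj) (proj2 (Vval_range t j Hj)))).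
    assert (Hzi := Hz01 i e Hi He); assert (Hzz : z <= zeta i e) by now apply Himin_le.
    rewrite geometric_value_S by lra; unfold c.
    rewrite Vval_S; eapply Rle_trans; [|apply (lmax_ge _ _ e He)]; cbv beta.
    set (A := rsum K (fun j => P i j * V t j)) in *.
    set (W := geometric_value z _ t) in *.
    (* Since [A <= beta], the one-step value increases with the success probability. *)
    nra.
Qed.

Lemma pos_part_neq_nil : pos_part E <> [].
Proof.
  destruct HEpos as [e [He He0]]; intros Hnil.
  assert (Hin : In e (pos_part E)).
  { apply filter_In; split; [exact He|]; destruct Rlt_dec; [reflexivity | lra]. }
  rewrite Hnil in Hin; destruct Hin.
Qed.

Lemma Vl_le_Vval (t i : nat) : (i < K)%nat -> Vlow t <= V t i.
Proof.
  intros Hi; destruct t as [|t]; [unfold Vlow, V; simpl; lra|].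
  unfold Vlow, Vl.
  destruct (lmax_attained (fun e => geometric_value (zeta imin e)
              (- lambda * e + zeta imin e * beta) (S t)) _ pos_part_neq_nil)
    as [e [He Hmax]].
  change (lmax (fun e => geometric_value (zeta imin e)
            (- lambda * e + zeta imin e * beta) (S t)) (pos_part E) <= V (S t) i).
  rewrite Hmax.
  apply filter_In in He as [He He0].
  destruct Rlt_dec as [Hepos|]; [|discriminate].
  exact (geometric_value_le_Vval e (S t) i He Hepos Hi).
Qed.

Lemma Vu_S (t : nat) :
  Vup (S t) = Vup t + lmax (fun e => - lambda * e + zeta imax e *
                             (beta - Rmax 0 (Vlow t))) E.
Proof.
  unfold Vup, Vu; rewrite seq_S, map_app, fold_right_app; simpl.
  rewrite fold_Rplus_init, Rplus_0_r, Nat.sub_0_r; reflexivity.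
Qed.

Lemma Vval_le_Vu (t i : nat) : (i < K)%nat -> V t i <= Vup t.
Proof.
  revert i; induction t as [|t IH]; intros i Hi; [unfold V, Vup, Vu; simpl; lra|].
  rewrite Vval_S, Vu_S; apply lmax_le; [exact E_neq_nil|]; intros e He.
  eapply Rle_trans; [|apply Rplus_le_compat_l, (lmax_ge _ _ e He)]; cbv beta.
  set (M := Rmax 0 (Vlow t)).
  assert (HA := expected_Vval_bounds i t M (Vup t) Hi
    (fun j Hj => conj (Rmax_lub _ _ _ (proj1 (Vval_range t j Hj)) (Vl_le_Vval t j Hj))
                      (IH j Hj))).
  assert (HAb := expected_Vval_bounds i t 0 beta Hi (Vval_range t)).
  assert (Hzi := Hz01 i e Hi He); assert (Hzm := Himax_ge i e Hi He).
  assert (HM : 0 <= M) by apply Rmax_l.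
  set (A := rsum K (fun j => P i j * V t j)) in *.
  (* [zeta_i beta + (1 - zeta_i) A = A + zeta_i (beta - A)] with [M <= A <= Vu t]. *)
  nra.
Qed.

End ValueBounds.

Theorem theorem7
  (beta lambda : R) (tau_n D_n : nat) (K : nat)
  (P : nat -> nat -> R) (E : list R) (zeta : nat -> R -> R) (imax imin : nat)
  (Hbeta : 0 <= beta) (Hlambda : 0 <= lambda) (Htau_n : (1 <= tau_n)%nat)
  (HK : (1 <= K)%nat)
  (HPnn : forall i j, (i < K)%nat -> (j < K)%nat -> 0 <= P i j)
  (HPsum : forall i, (i < K)%nat -> rsum K (fun j => P i j) = 1)
  (HEnd : NoDup E)
  (HEnn : forall e, In e E -> 0 <= e)
  (HE0 : In 0 E)
  (HEpos : exists e, In e E /\ 0 < e)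
  (Hz01 : forall i e, (i < K)%nat -> In e E -> 0 <= zeta i e <= 1)
  (Hz0 : forall i, (i < K)%nat -> zeta i 0 = 0)
  (Hzpos : forall i e, (i < K)%nat -> In e E -> 0 < e -> 0 < zeta i e)
  (Hzconc : forall i, (i < K)%nat -> exists g : R -> R,
      concave_nonneg g /\ strict_incr_nonneg g /\
      forall e, In e E -> zeta i e = g e)
  (Hord : forall i j, (i < K)%nat -> (j < K)%nat ->
      (forall e, In e E -> zeta j e <= zeta i e) \/
      (forall e, In e E -> zeta i e <= zeta j e))
  (Himax : (imax < K)%nat)
  (Himax_ge : forall i e, (i < K)%nat -> In e E -> zeta i e <= zeta imax e)
  (Himin : (imin < K)%nat)
  (Himin_le : forall i e, (i < K)%nat -> In e E -> zeta imin e <= zeta i e) :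
  forall i tau, (i < K)%nat -> (1 <= tau <= tau_n + D_n)%nat ->
    Rmax 0 (Vl E zeta imin beta lambda tau)
      <= Vval K P E zeta beta lambda tau i
      <= Rmin beta (Vu E zeta imin imax beta lambda tau).
Proof.
  intros i tau Hi _.
  assert (Hrange : 0 <= Vval K P E zeta beta lambda tau i <= beta)
    by (eapply Vval_range; eauto).
  split.
  - apply Rmax_lub; [apply Hrange | eapply Vl_le_Vval; eauto].
  - apply Rmin_glb; [apply Hrange | eapply Vval_le_Vu; eauto].
Qed.
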